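(* Let $X$ be a nontrivial real Hausdorff locally convex space and let $g\in\Gamma(X)$ be sublinear. For $x^{\ast}\in X^{\ast}$ set $L_{x^{\ast}}:=\{x\in X: g(x)=\langle x,x^{\ast}\rangle \text{ and } g(-x)=-\langle x,x^{\ast}\rangle\}$. Then: (a) For every $x^{\ast}\in X^{\ast}$, $L_{x^{\ast}}$ is a closed linear subspace of $X$, $$L_{x^{\ast}}=\{x\in X: g(x)\le\langle x,x^{\ast}\rangle,\ g(-x)\le-\langle x,x^{\ast}\rangle\}=[\partial g(0)-x^{\ast}]^{\perp},$$ and $g(x+u)=g(x)+\langle u,x^{\ast}\rangle$ for all $x\in X$ and $u\in L_{x^{\ast}}$. (b) If $u^{\ast}\in\partial g(0)$, then $L_{u^{\ast}}=[\partial g(0)-\partial g(0)]^{\perp}$. Consequently, $L_{x^{\ast}}\subset L_{u^{\ast}}$ for all $x^{\ast}\in X^{\ast}$ and $u^{\ast}\in\partial g(0)$; in particular $L_{u^{\ast}}=L_{v^{\ast}}$ for all $u^{\ast},v^{\ast}\in\partial g(0)$.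
   Context: $X^{\ast}$ is the topological dual of $X$ (weak$^{\ast}$ topology), $\langle x,x^{\ast}\rangle:=x^{\ast}(x)$. $\Gamma(X)$ is the set of proper lower semicontinuous convex functions $X\to\mathbb{R}\cup\{\pm\infty\}$. $\partial g(0)=\{x^{\ast}\in X^{\ast}:\langle x',x^{\ast}\rangle\le g(x')\ \forall x'\in X\}$. For $B\subset X^{\ast}$, $B^{\perp}=\{x\in X:\langle x,x^{\ast}\rangle=0\ \forall x^{\ast}\in B\}$; $\partial g(0)-x^{\ast}$ and $\partial g(0)-\partial g(0)$ are algebraic (Minkowski) differences. *)

From HB Require Import structures.
From mathcomp Require Import all_boot all_order all_algebra.
From mathcomp Require Import all_classical all_reals all_analysis.
Set Implicit Arguments. Unset Strict Implicit. Unset Printing Implicit Defensive.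
Import Order.TTheory GRing.Theory Num.Theory numFieldTopology.Exports numFieldNormedType.Exports.
Local Open Scope classical_set_scope.
Local Open Scope ring_scope.

Section defs.
Context {R : realType} {X : tvsType R}.

(* topological dual X^* : continuous linear functionals X -> R;
   <x, x^*> is written f x *)
Definition dual_space : set (X -> R) :=
  [set f | (forall (a : R) (x y : X), f (a *: x + y) = a * f x + f y)
           /\ continuous (fun x : X => f x)].

Definition econvex (g : X -> \bar R) : Prop :=
  forall (x y : X) (t : R), 0 < t < 1 ->
    (g ((1 - t) *: x + t *: y)%R <= (1 - t)%:E * g x + t%:E * g y)%E.

Definition eproper (g : X -> \bar R) : Prop :=
  (forall x, g x != -oo%E) /\ (exists x, (g x < +oo)%E).

Definition Gamma (g : X -> \bar R) : Prop :=
  eproper g /\ lower_semicontinuous g /\ econvex g.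

Definition sublinear (g : X -> \bar R) : Prop :=
  g 0 = 0%E /\
  (forall (t : R) (x : X), 0 < t -> g (t *: x) = (t%:E * g x)%E) /\
  (forall x y : X, (g (x + y)%R <= g x + g y)%E).

Definition subdiff0 (g : X -> \bar R) : set (X -> R) :=
  [set f | dual_space f /\ forall x', ((f x')%:E <= g x')%E].

Definition fdiff (A B : set (X -> R)) : set (X -> R) :=
  [set h | exists a b, A a /\ B b /\ h = (fun x => a x - b x)].

Definition perp (B : set (X -> R)) : set X :=
  [set x | forall f, B f -> f x = 0].

Definition Lset (g : X -> \bar R) (f : X -> R) : set X :=
  [set x | g x = (f x)%:E /\ g (- x) = (- f x)%:E].

Definition lin_subspace (L : set X) : Prop :=
  L 0 /\ (forall x y, L x -> L y -> L (x + y)) /\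
  (forall (a : R) x, L x -> L (a *: x)).

End defs.

From HB Require Import structures.
From mathcomp Require Import all_boot all_order all_algebra.
From mathcomp Require Import all_classical all_reals all_analysis.
From mathcomp Require Import ring lra.
Import Order.TTheory GRing.Theory Num.Theory numFieldTopology.Exports numFieldNormedType.Exports.
Local Open Scope classical_set_scope.
Local Open Scope ring_scope.

(* A sublinear lower semicontinuous g is the supremum of its continuous linear
   minorants, i.e. of the elements of ∂g(0).  To separate g(x0) > r, take a
   convex symmetric neighbourhood V of 0 on which g > -1 and on which x0 + V
   stays in {g > r}; the infimal convolution of g with a large multiple of the
   gauge of V is a real-valued sublinear function, bounded on V and still > r
   at x0, and a Hahn-Banach minorant of it that is exact at x0 does the job.
   Then x lies in L_{x*} exactly when every element of ∂g(0) agrees with x* at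
   x, which gives (a); (b) follows by subtracting two such identities. *)

Set Implicit Arguments. Unset Strict Implicit. Unset Printing Implicit Defensive.

Section linear_form.
Context {R : realType} {X : lmodType R}.

Definition linear_form (h : X -> R) := forall a x y, h (a *: x + y) = a * h x + h y.

Variable h : X -> R.
Hypothesis hl : linear_form h.

Lemma linear_form0 : h 0 = 0.
Proof. by have := hl 1 0 0; rewrite scaler0 addr0 mul1r => E; lra. Qed.

Lemma linear_formD x y : h (x + y) = h x + h y.
Proof. by rewrite -[x]scale1r hl mul1r scale1r. Qed.

Lemma linear_formZ a x : h (a *: x) = a * h x.
Proof. by rewrite -[a *: x]addr0 hl linear_form0 !addr0. Qed.

Lemma linear_formN x : h (- x) = - h x.
Proof. by rewrite -scaleN1r linear_formZ mulN1r. Qed.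

End linear_form.

Section real_sublinear.
Context {R : realType} {X : lmodType R}.

Definition real_sublinear (q : X -> R) :=
  (forall t x, 0 < t -> q (t *: x) = t * q x) /\
  (forall x y, q (x + y) <= q x + q y).

Lemma real_sublinear0 q : real_sublinear q -> q 0 = 0.
Proof.
by move=> [hZ _]; have := hZ 2 0 (ltr0Sn _ 1); rewrite scaler0 => h; lra.
Qed.

Lemma real_sublinearZ q t x : real_sublinear q -> 0 <= t -> q (t *: x) = t * q x.
Proof.
move=> hq; rewrite le_eqVlt => /orP[/eqP <-|t0]; last exact: hq.1.
by rewrite scale0r mul0r real_sublinear0.
Qed.

Lemma real_sublinearN q x : real_sublinear q -> - q (- x) <= q x.
Proof.
move=> hq; have := hq.2 x (- x); rewrite subrr real_sublinear0 //.
by rewrite -lerBlDr sub0r.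
Qed.

Lemma inf_real_sublinear (S : X -> set R) :
  (forall x, S x !=set0) -> (forall x, has_lbound (S x)) ->
  (forall t x e, 0 < t -> S x e -> S (t *: x) (t * e)) ->
  (forall x y e1 e2, S x e1 -> S y e2 -> exists2 e, S (x + y) e & e <= e1 + e2) ->
  real_sublinear (fun x => inf (S x)).
Proof.
move=> ne lb hZ hD; split.
- move=> t x t0; apply/eqP; rewrite eq_le; apply/andP; split.
  + rewrite -ler_pdivrMl //; apply: lb_le_inf => // e Se.
    rewrite ler_pdivrMl //; apply: ge_inf => //; exact: hZ.
  + apply: lb_le_inf => // e Se.
    rewrite -ler_pdivlMl //; apply: ge_inf => //.
    have ti : 0 < t^-1 by rewrite invr_gt0.
    have := hZ t^-1 _ _ ti Se.
    by rewrite scalerA mulVf ?gt_eqF // scale1r.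
- move=> x y; rewrite -inf_sumE; last 2 first.
  + by split; [exact: ne | exact: lb].
  + by split; [exact: ne | exact: lb].
  apply: lb_le_inf.
    case: (ne x) => a Sa; case: (ne y) => b Sb.
    by exists (a + b); exists a => //; exists b.
  move=> _ [a Sa [b Sb <-]]; have [e Se le] := hD _ _ _ _ Sa Sb.
  apply: le_trans le; exact: ge_inf.
Qed.

Definition shift_inf (q : X -> R) (y x : X) :=
  inf [set q (x + t *: y) - t * q y | t in [set t : R | 0 <= t]].

Section shift_inf.
Variables (q : X -> R) (y : X).
Hypothesis hq : real_sublinear q.

Lemma shift_inf_lbound x :
  has_lbound [set q (x + t *: y) - t * q y | t in [set t : R | 0 <= t]].
Proof.
exists (- q (- x)) => _ [t /= t0 <-].
have := hq.2 (x + t *: y) (- x).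
rewrite addrC addKr real_sublinearZ //; lra.
Qed.

Lemma shift_inf_le x : shift_inf q y x <= q x.
Proof.
have -> : q x = q (x + 0 *: y) - 0 * q y by rewrite scale0r addr0 mul0r subr0.
by apply: ge_inf; [exact: shift_inf_lbound | exists 0 => /=].
Qed.

Lemma shift_inf_opp : shift_inf q y (- y) <= - q y.
Proof.
have -> : - q y = q (- y + 1 *: y) - 1 * q y.
  by rewrite scale1r addNr real_sublinear0 // mul1r sub0r.
by apply: ge_inf; [exact: shift_inf_lbound | exists 1 => /=].
Qed.

Lemma shift_inf_sublinear : real_sublinear (shift_inf q y).
Proof.
apply: inf_real_sublinear.
- by move=> x; exists (q (x + 0 *: y) - 0 * q y); exists 0 => /=.
- exact: shift_inf_lbound.
- move=> s x _ s0 [t /= t0 <-]; exists (s * t); first by rewrite /= mulr_ge0 // ltW.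
  have := hq.1 s (x + t *: y) s0; rewrite scalerDr scalerA => ->.
  by rewrite mulrBr mulrA.
- move=> x x' _ _ [t1 /= t1g <-] [t2 /= t2g <-].
  exists (q (x + x' + (t1 + t2) *: y) - (t1 + t2) * q y).
    by exists (t1 + t2) => //; rewrite /= addr_ge0.
  have := hq.2 (x + t1 *: y) (x' + t2 *: y).
  rewrite addrACA -scalerDl mulrDl; lra.
Qed.

End shift_inf.

(* A minimal q lies below, hence equals, its regularization [shift_inf q y],
   which takes a value at most [- q y] at [- y]; so q is odd, hence linear. *)
Lemma minimal_real_sublinear_linear q : real_sublinear q ->
  (forall q', real_sublinear q' -> (forall x, q' x <= q x) -> forall x, q x <= q' x) ->
  linear_form q.
Proof.
move=> hq hmin.
have qN y : q (- y) = - q y.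
  have := hmin _ (shift_inf_sublinear y hq) (shift_inf_le y hq) (- y).
  have := shift_inf_opp y hq; have := real_sublinearN y hq; lra.
have qD x y : q (x + y) = q x + q y.
  have := hq.2 x y; have := hq.2 (- x) (- y); rewrite -opprD !qN; lra.
have qZ a x : q (a *: x) = a * q x.
  have [a0|a0|->] := ltgtP a 0; last by rewrite scale0r mul0r real_sublinear0.
  - have := hq.1 (- a) x; rewrite oppr_gt0 => /(_ a0).
    by rewrite scaleNr qN mulNr => /eqP; rewrite eqr_opp => /eqP.
  - exact: hq.1.
by move=> a x y; rewrite qD qZ.
Qed.

Section chain.
Variable A : set (X -> R).
Hypothesis A_sublinear : forall q, A q -> real_sublinear q.
Hypothesis A_total : forall q q', A q -> A q' ->
  (forall x, q x <= q' x) \/ (forall x, q' x <= q x).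
Hypothesis A_neq0 : A !=set0.

Lemma chain_lbound x : has_lbound [set q x | q in A].
Proof.
have [q1 Aq1] := A_neq0; exists (- q1 (- x)) => _ [q Aq <-].
have := real_sublinearN x (A_sublinear Aq1).
have := real_sublinearN x (A_sublinear Aq).
by case: (A_total Aq Aq1) => [/(_ (- x))|/(_ x)]; lra.
Qed.

Lemma chain_inf_le q x : A q -> inf [set q x | q in A] <= q x.
Proof. by move=> Aq; apply: ge_inf; [exact: chain_lbound | exists q]. Qed.

Lemma chain_inf_sublinear : real_sublinear (fun x => inf [set q x | q in A]).
Proof.
apply: inf_real_sublinear.
- by move=> x; have [q Aq] := A_neq0; exists (q x); exists q.
- exact: chain_lbound.
- by move=> t x _ t0 [q Aq <-]; exists q => //; rewrite (A_sublinear Aq).1.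
- move=> x y _ _ [q1 Aq1 <-] [q2 Aq2 <-].
  have [le12|le21] := A_total Aq1 Aq2.
  + exists (q1 (x + y)); first by exists q1.
    have := (A_sublinear Aq1).2 x y; have := le12 y; lra.
  + exists (q2 (x + y)); first by exists q2.
    have := (A_sublinear Aq2).2 x y; have := le21 x; lra.
Qed.

End chain.

Lemma hahn_banach q0 : real_sublinear q0 ->
  exists2 h, linear_form h & forall x, h x <= q0 x.
Proof.
move=> hq0.
pose T := {q : X -> R | real_sublinear q /\ forall x, q x <= q0 x}.
pose elt q (hq : real_sublinear q) (le_q : forall x, q x <= q0 x) : T :=
  exist _ q (conj hq le_q).
pose t0 := elt q0 hq0 (fun=> lexx _).
pose dominates (s t : T) : bool := `[< forall x, sval t x <= sval s x >].
have [||A A_total|t tmax] := @ZL_preorder T t0 dominates.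
- by move=> t; apply/asboolP.
- move=> a b c /asboolP ab /asboolP bc; apply/asboolP => x.
  exact: le_trans (bc x) (ab x).
- have [[s As]|A0] := pselect (A !=set0); last first.
    by exists t0 => s As; exfalso; apply: A0; exists s.
  pose B := sval @` A.
  have B_sublinear q : B q -> real_sublinear q by move=> [u _ <-]; exact: (proj1 (svalP u)).
  have B_total q q' : B q -> B q' ->
      (forall x, q x <= q' x) \/ (forall x, q' x <= q x).
    move=> [u Au <-] [u' Au' <-].
    by case: (A_total _ _ Au Au') => /asboolP; [right|left].
  have Bs : B (sval s) by exists s.
  have Bne : B !=set0 by exists (sval s).
  have Binf_le := chain_inf_le B_sublinear B_total Bne.
  have Binf := chain_inf_sublinear B_sublinear B_total Bne.
  have Binf_le0 x : inf [set q x | q in B] <= q0 x.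
    exact: le_trans (Binf_le _ x Bs) (proj2 (svalP s) x).
  exists (elt _ Binf Binf_le0) => u Au; apply/asboolP => x /=.
  by apply: Binf_le; exists u.
- exists (sval t); last exact: (proj2 (svalP t)).
  apply: minimal_real_sublinear_linear (proj1 (svalP t)) _ => q hq le_q.
  have le_q0 x : q x <= q0 x := le_trans (le_q x) (proj2 (svalP t) x).
  by have /asboolP := tmax (elt q hq le_q0) (asboolT le_q).
Qed.

Lemma hahn_banach_exact q x0 : real_sublinear q ->
  exists h, [/\ linear_form h, forall x, h x <= q x & h x0 = q x0].
Proof.
move=> hq; have [h hl hle] := hahn_banach (shift_inf_sublinear x0 hq).
have h_le x : h x <= q x := le_trans (hle x) (shift_inf_le x0 hq x).
exists h; split => //; apply/le_anti; rewrite h_le /=.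
have := hle (- x0); have := shift_inf_opp x0 hq; rewrite (linear_formN hl); lra.
Qed.

End real_sublinear.

Section tvs.
Context {R : realType} {X : tvsType R}.

Definition convex (V : set X) := forall a b l, V a -> V b -> 0 <= l -> l <= 1 ->
  V (l *: a + (1 - l) *: b).

Lemma convex_conic_comb (V : set X) a b (al be : R) : convex V -> V a -> V b ->
  0 <= al -> 0 <= be -> exists2 w, V w & al *: a + be *: b = (al + be) *: w.
Proof.
move=> cV Va Vb a0 b0; have [s0|sn0] := eqVneq (al + be) 0.
  have [-> ->] : al = 0 /\ be = 0 by split; lra.
  by exists a => //; rewrite addr0 !scale0r addr0.
have sp : 0 < al + be by rewrite lt_def sn0 addr_ge0.
exists ((al / (al + be)) *: a + (1 - al / (al + be)) *: b).
  apply: cV => //; first exact: divr_ge0 (ltW sp).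
  by rewrite ler_pdivrMr // mul1r lerDl.
have -> : 1 - al / (al + be) = be / (al + be).
  by rewrite -(divff sn0) -mulrBl addrC addKr.
by rewrite scalerDr !scalerA !mulrA !(mulrC (al + be)) -!mulrA divff // !mulr1.
Qed.

Lemma nbhs0_convex_symmetric (W : set X) : nbhs 0 W -> exists V : set X,
  [/\ nbhs 0 V, V `<=` W, (forall v, V v -> V (- v)) & convex V].
Proof.
move=> nW.
have [U [nU UW cU]] : exists U : set X, [/\ nbhs 0 U, U `<=` W & convex U].
  have [B Bc [Bo Bb]] := @locally_convex R X.
  have [U [BU U0] UW] := Bb 0 W nW.
  exists U; split => //; first by apply: open_nbhs_nbhs; split => //; exact: Bo.
  move=> a b l Ua Ub l0 l1.
  have := Bc U (mem_set BU) a b (Itv01 l0 l1) (mem_set Ua) (mem_set Ub).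
  by rewrite inE; exact.
exists (U `&` [set v | U (- v)]); split.
- apply: filterI => //.
  by apply: filterS (nbhs0N nU) => v [u Uu <-]; rewrite /= opprK.
- by move=> v [] /UW.
- by move=> v [] Uv Unv; split => //=; rewrite opprK.
- move=> a b l [Ua Una] [Ub Unb] l0 l1; split; first exact: cU.
  by rewrite /= opprD -!scalerN; apply: cU.
Qed.

Lemma nbhs0_absorbing (V : set X) x : nbhs 0 V ->
  exists2 s : R, 0 < s & exists2 v, V v & x = s *: v.
Proof.
move=> nV.
have := @scale_continuous R X (0, x) V; rewrite /= scale0r => /(_ nV) [] /= B [B1 B2] BU.
move/nbhs_ballP: B1 => [e /= e0 eB].
have e20 : 0 < e / 2 by lra.
have he : ball (0 : R^o) e (e / 2).
  by rewrite /ball /= sub0r normrN gtr0_norm //; lra.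
have Vex := BU (e / 2, x) (conj (eB _ he) (nbhs_singleton B2)).
exists (e / 2)^-1; first by rewrite invr_gt0.
by exists ((e / 2) *: x) => //; rewrite scalerA mulVf ?scale1r // gt_eqF.
Qed.

Lemma linear_form_continuous (h : X -> R) (V : set X) M : linear_form h ->
  nbhs 0 V -> (forall v, V v -> `|h v| <= M) -> continuous h.
Proof.
move=> hl nV hV x; apply/cvgrPdist_lt => e e0.
have M0 : 0 <= M.
  by have := hV 0 (nbhs_singleton nV); rewrite linear_form0 // normr0.
pose d := e / (M + 1).
have d0 : 0 < d by rewrite divr_gt0 // ltr_wpDl.
apply: filterS (nbhsT x (nbhs0Z (lt0r_neq0 d0) nV)) => _ [_ [v Vv <-] <-].
rewrite /= [x + _]addrC hl opprD addrCA subrr addr0 normrN normrM gtr0_norm //.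
have := hV v Vv; have : d * (M + 1) = e by rewrite /d mulfVK // gt_eqF // ltr_wpDl.
nra.
Qed.

End tvs.

Section gauge_infconv.
Context {R : realType} {X : tvsType R} (g : X -> \bar R).
Hypotheses (sg : sublinear g) (g_neqNy : forall x, g x != -oo%E).
Variable V : set X.
Hypotheses (V_nbhs : nbhs 0 V) (V_sym : forall v, V v -> V (- v)) (V_convex : convex V).
Hypothesis gV : forall v, V v -> ((-1)%:E < g v)%E.
Variable rho : R.
Hypothesis rho_ge1 : 1 <= rho.

Lemma scale_V_ge w t c : V w -> 0 <= t -> g (t *: w) = c%:E -> - t <= c.
Proof.
move=> Vw; rewrite le_eqVlt => /orP[/eqP <-|tp].
  by rewrite scale0r sg.1 => -[<-]; rewrite oppr0.
rewrite sg.2.1 //; have := gV Vw; case: (g w) => [d| |] //=.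
  by rewrite lte_fin -EFinM => d1 [<-]; nra.
by rewrite mulry gtr0_sg // mul1e.
Qed.

Lemma cone_V_ge s t v' v c : 0 < s -> 0 <= t -> V v' -> V v ->
  g (s *: v' - t *: v) = c%:E -> - (s + t) <= c.
Proof.
move=> s0 t0 Vv' Vv gE.
have [w Vw wE] := convex_conic_comb V_convex Vv' (V_sym Vv) (ltW s0) t0.
by apply: (scale_V_ge Vw); [rewrite addr_ge0 // ltW | rewrite -wE scalerN].
Qed.

(* The infimal convolution of g with rho times the gauge of V:
   x |-> inf_{t >= 0, v in V} g (x - t v) + rho t, taken over finite values. *)
Definition gauge_infconv_set x :=
  [set e | exists t v c, [/\ 0 <= t, V v, g (x - t *: v) = c%:E & e = c + rho * t]].

Definition gauge_infconv x := inf (gauge_infconv_set x).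

Let gauge_infconv_set_neq0 x : gauge_infconv_set x !=set0.
Proof.
have [s s0 [v Vv ->]] := nbhs0_absorbing x V_nbhs.
exists (0 + rho * s); exists s, v, 0; split => //; first exact: ltW.
by rewrite subrr sg.1.
Qed.

Let gauge_infconv_set_lbound x : has_lbound (gauge_infconv_set x).
Proof.
have [s s0 [v' Vv' xE]] := nbhs0_absorbing x V_nbhs.
exists (- s) => _ [t [v [c [t0 Vv gE ->]]]].
rewrite xE in gE; have := cone_V_ge s0 t0 Vv' Vv gE.
have : 0 <= (rho - 1) * t by rewrite mulr_ge0 // subr_ge0.
lra.
Qed.

Let gauge_infconv_le_set x e : gauge_infconv_set x e -> gauge_infconv x <= e.
Proof. exact: ge_inf. Qed.

Lemma gauge_infconv_sublinear : real_sublinear gauge_infconv.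
Proof.
apply: inf_real_sublinear => //.
- move=> s x _ s0 [t [v [c [t0 Vv gE ->]]]].
  exists (s * t), v, (s * c); split => //; first by rewrite mulr_ge0 // ltW.
    by rewrite -scalerA -scalerBr sg.2.1 // gE -EFinM.
  by rewrite mulrDr mulrCA.
- move=> x y _ _ [t1 [v1 [c1 [t10 Vv1 gE1 ->]]]] [t2 [v2 [c2 [t20 Vv2 gE2 ->]]]].
  have [w Vw wE] := convex_conic_comb V_convex Vv1 Vv2 t10 t20.
  have hsum : x + y - (t1 + t2) *: w = (x - t1 *: v1) + (y - t2 *: v2).
    by rewrite -wE opprD addrACA.
  have := sg.2.2 (x - t1 *: v1) (y - t2 *: v2); rewrite -hsum gE1 gE2 -EFinD.
  move: (g_neqNy (x + y - (t1 + t2) *: w)).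
  case E: (g (x + y - (t1 + t2) *: w)) => [c| |] //= _; rewrite lee_fin => cle.
  exists (c + rho * (t1 + t2)); last by rewrite mulrDr; lra.
  by exists (t1 + t2), w, c; split => //; lra.
Qed.

Lemma gauge_infconv_le x : ((gauge_infconv x)%:E <= g x)%E.
Proof.
move: (g_neqNy x); case E : (g x) => [c| |] //= _; last by rewrite leey.
rewrite lee_fin; apply: gauge_infconv_le_set; exists 0, 0, c.
by rewrite scaler0 subr0 mulr0 addr0; split => //; exact: nbhs_singleton.
Qed.

Lemma gauge_infconv_le_rho v : V v -> gauge_infconv v <= rho.
Proof.
move=> Vv; apply: gauge_infconv_le_set; exists 1, v, 0.
by rewrite scale1r subrr sg.1 mulr1 add0r.
Qed.

(* For t < 1 the point x0 - t v stays in x0 + V; for t >= 1 the term rho t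
   dominates the linear lower bound of [cone_V_ge]. *)
Lemma gauge_infconv_ge (x0 : X) (r s0 : R) (v0 : X) : (forall w, V w -> (r%:E < g (x0 + w)%R)%E) ->
  0 < s0 -> V v0 -> x0 = s0 *: v0 -> 1 + `|r| + s0 <= rho -> r <= gauge_infconv x0.
Proof.
move=> gx0V s0p Vv0 x0E rho_ge.
apply: lb_le_inf => // _ [t [v [c [t0 Vv gE ->]]]].
have [t1|t1] := ltP t 1.
  have t1' : 0 <= 1 - t by lra.
  have [w Vw wE] := convex_conic_comb V_convex (V_sym Vv) (nbhs_singleton V_nbhs) t0 t1'.
  rewrite scaler0 addr0 scalerN subrKC scale1r in wE.
  have := gx0V _ Vw; rewrite -wE gE lte_fin => rc.
  have : 0 <= rho * t by rewrite mulr_ge0 //; have := normr_ge0 r; lra.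
  lra.
rewrite x0E in gE; have := cone_V_ge s0p t0 Vv0 Vv gE.
have := ler_norm r.
have : 0 <= `|r| * (t - 1) by rewrite mulr_ge0 //; lra.
have : 0 <= s0 * (t - 1) by rewrite mulr_ge0 //; lra.
nra.
Qed.

End gauge_infconv.

Section subdiff0.
Context {R : realType} {X : tvsType R} (g : X -> \bar R).
Hypotheses (gG : Gamma g) (sg : sublinear g).

Lemma subdiff0_ge_nbhs x0 r (N : set X) : nbhs x0 N ->
  (forall y, N y -> (r%:E < g y)%E) -> exists h, subdiff0 g h /\ r <= h x0.
Proof.
move=> nN gN; have g_neqNy := gG.1.1.
have g0 : ((-1)%:E < g 0%R)%E by rewrite sg.1 lte_fin ltrN10.
have [W0 nW0 gW0] := gG.2.1 0 (-1) g0.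
have nN' : nbhs 0 [set v | N (x0 + v)].
  have := nbhsB (- x0) nN; rewrite addNr; apply: filterS => _ [y Ny <-].
  by rewrite /= addNKr.
have [V [nV VW V_sym V_convex]] := nbhs0_convex_symmetric (filterI nW0 nN').
have gV v : V v -> ((-1)%:E < g v)%E by move=> /VW [] /gW0.
have [s0 s0p [v0 Vv0 x0E]] := nbhs0_absorbing x0 nV.
pose rho := 1 + `|r| + s0.
have rho_ge1 : 1 <= rho by rewrite /rho; have := normr_ge0 r; lra.
have P_sublinear := gauge_infconv_sublinear sg g_neqNy nV V_sym V_convex gV rho_ge1.
have P_le_g := gauge_infconv_le sg g_neqNy nV V_sym V_convex gV rho_ge1.
have P_le_rho := gauge_infconv_le_rho sg nV V_sym V_convex gV rho_ge1.
have [h [hl h_le hx0]] := hahn_banach_exact x0 P_sublinear.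
exists h; split; last first.
  rewrite hx0; apply: (gauge_infconv_ge sg nV V_sym V_convex gV _ s0p Vv0 x0E) => //.
  by move=> w /VW [_ /gN].
split; first split => //.
  apply: (linear_form_continuous hl nV (M := rho)) => v Vv.
  have := P_le_rho _ Vv; have := P_le_rho _ (V_sym _ Vv).
  have := h_le v; have := h_le (- v); rewrite (linear_formN hl) ler_norml; lra.
by move=> x; apply: le_trans (P_le_g x); rewrite lee_fin.
Qed.

Lemma subdiff0_gt x0 r : (r%:E < g x0)%E -> exists h, subdiff0 g h /\ r < h x0.
Proof.
move=> lt_r; have [r' [rr' r'g]] : exists r', r < r' /\ (r'%:E < g x0)%E.
  move: lt_r; case: (g x0) => [c| |] // => [|_].
    by rewrite !lte_fin => rc; exists ((r + c) / 2); rewrite !lte_fin; split; lra.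
  by exists (r + 1); rewrite ltey; split => //; lra.
have [N nN gN] := gG.2.1 x0 r' r'g.
have [h [sh hx0]] := subdiff0_ge_nbhs nN gN.
by exists h; split => //; lra.
Qed.

End subdiff0.

Section annihilator.
Context {R : realType} {X : tvsType R}.
Implicit Types (A B : set (X -> R)) (f : X -> R).

Lemma fdiff_dual A B : A `<=` dual_space -> B `<=` dual_space ->
  fdiff A B `<=` dual_space.
Proof.
move=> AD BD _ [a [b [/AD [al ac] [/BD [bl bc] ->]]]]; split.
  by move=> r x y; rewrite al bl; ring.
by move=> x; apply: continuousB; [exact: ac | exact: bc].
Qed.

Lemma perp_closed B : B `<=` dual_space -> closed (perp B).
Proof.
move=> BD; have -> : perp B = \bigcap_(h in B) (h @^-1` [set 0]).
  by apply/seteqP; split => x H h Bh; apply: H.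
apply: closed_bigI => h /BD [_ hc].
by apply: preimage_closed; [move=> x _; exact: hc | exact: closed_eq].
Qed.

Lemma perp_lin_subspace B : B `<=` dual_space -> lin_subspace (perp B).
Proof.
move=> BD; split; first by move=> h /BD [hl _]; exact: linear_form0.
split=> [x y Px Py | a x Px] h Bh; have [hl _] := BD h Bh.
  by rewrite linear_formD // Px // Py // addr0.
by rewrite linear_formZ // Px // mulr0.
Qed.

Lemma perp_fdiff1P A f x : perp (fdiff A [set f]) x <-> forall a, A a -> a x = f x.
Proof.
split=> [H a Aa | H _ [a [b [Aa [-> ->]]]]]; last by rewrite /= H // subrr.
by apply/eqP; rewrite -subr_eq0; apply/eqP; apply: (H (fun z => a z - f z)); exists a, f.
Qed.

Lemma perp_fdiff1_sub A f : perp (fdiff A [set f]) `<=` perp (fdiff A A).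
Proof. by move=> x /perp_fdiff1P H _ [a [b [Aa [Ab ->]]]]; rewrite /= !H // subrr. Qed.

Lemma perp_fdiff1 A u : A u -> perp (fdiff A [set u]) = perp (fdiff A A).
Proof.
move=> Au; apply/seteqP; split; first exact: perp_fdiff1_sub.
move=> x H; apply/perp_fdiff1P => a Aa; apply/eqP; rewrite -subr_eq0; apply/eqP.
by apply: (H (fun z => a z - u z)); exists a, u.
Qed.

End annihilator.

Section Lset.
Context {R : realType} {X : tvsType R} (g : X -> \bar R).
Hypotheses (gG : Gamma g) (sg : sublinear g).

Lemma Lset_le (f : X -> R) :
  Lset g f = [set x | (g x <= (f x)%:E)%E /\ (g (- x)%R <= (- f x)%:E)%E].
Proof.
apply/seteqP; split => x /=; first by move=> [-> ->].
move=> [h1 h2]; have := sg.2.2 x (- x); rewrite subrr sg.1.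
move: h1 h2 (gG.1.1 x) (gG.1.1 (- x)).
case E1: (g x) => [a| |] //; case E2: (g (- x)) => [b| |] //.
rewrite !lee_fin => h1 h2 _ _ h3.
have h4 : 0 <= a + b by rewrite -lee_fin EFinD.
by rewrite /Lset /= E1 E2; split; congr EFin; lra.
Qed.

Lemma Lset_perp (f : X -> R) : Lset g f = perp (fdiff (subdiff0 g) [set f]).
Proof.
apply/seteqP; split => x.
  move=> [gx gNx]; apply/perp_fdiff1P => h [[hl _] hg].
  by have := hg x; have := hg (- x); rewrite gx gNx (linear_formN hl) !lee_fin; lra.
move=> /perp_fdiff1P Hf; rewrite Lset_le; split; rewrite leNgt; apply/negP.
  by move=> /(subdiff0_gt gG sg) [h [sh]]; rewrite Hf //; lra.
move=> /(subdiff0_gt gG sg) [h [sh]].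
by rewrite (linear_formN sh.1.1) Hf //; lra.
Qed.

Lemma Lset_translate (f : X -> R) x u : Lset g f u -> g (x + u)%R = (g x + (f u)%:E)%E.
Proof.
move=> [gu gNu]; apply/eqP; rewrite eq_le; apply/andP; split.
  by rewrite -gu; exact: sg.2.2.
have := sg.2.2 (x + u) (- u); rewrite addrK gNu.
move: (gG.1.1 x) (gG.1.1 (x + u)).
case: (g x) => [a| |] //; case: (g (x + u)) => [b| |] //.
  by rewrite -EFinD !lee_fin => _ _; lra.
by move=> _ _ _; rewrite leey.
Qed.

End Lset.

Unset Implicit Arguments. Set Strict Implicit.

Theorem proposition4 (R : realType) (X : tvsType R)
  (hX : hausdorff_space X) (nontriv : exists x : X, x != 0)
  (g : X -> \bar R) (hg : Gamma g) (sg : sublinear g) :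
  (forall f : X -> R, dual_space f ->
     [/\ closed (Lset g f), lin_subspace (Lset g f),
         Lset g f = [set x | (g x <= (f x)%:E)%E /\ (g (- x)%R <= (- f x)%:E)%E],
         Lset g f = perp (fdiff (subdiff0 g) [set f])
       & forall x u, Lset g f u -> g (x + u)%R = (g x + (f u)%:E)%E])
  /\
  (forall u : X -> R, subdiff0 g u ->
     [/\ Lset g u = perp (fdiff (subdiff0 g) (subdiff0 g)),
         (forall f : X -> R, dual_space f -> Lset g f `<=` Lset g u)
       & forall v : X -> R, subdiff0 g v -> Lset g u = Lset g v]).
Proof.
have subdiff0_dual : subdiff0 g `<=` dual_space by move=> h [].
split=> [f df | u su].
  have B_dual : fdiff (subdiff0 g) [set f] `<=` dual_space.
    by apply: fdiff_dual subdiff0_dual _ => h ->.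
  split.
  - by rewrite (Lset_perp hg sg); exact: perp_closed.
  - by rewrite (Lset_perp hg sg); exact: perp_lin_subspace.
  - exact: (Lset_le hg sg).
  - exact: (Lset_perp hg sg).
  - exact: (Lset_translate hg sg).
have Lu : Lset g u = perp (fdiff (subdiff0 g) (subdiff0 g)).
  by rewrite (Lset_perp hg sg) perp_fdiff1.
split=> // [f _ | v sv]; rewrite Lu (Lset_perp hg sg).
  exact: perp_fdiff1_sub.
by rewrite perp_fdiff1.
Qed.
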